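(* Let $\mathcal P$ be a projective plane of finite order $n$. Then $\mathcal P$ contains a Fano configuration (seven points and seven lines, each line containing exactly three of the points and each point on exactly three of the lines, i.e. a subplane of order $2$) if and only if $\mathcal P$ can be coordinatised (in the sense described in the context, with some labelling set $\mathcal R$ of cardinality $n$) in such a way that the resulting additive loop $(\mathcal R,\oplus)$ contains an involution, i.e. an element $t\neq 0$ with $t\oplus t=0$.
   Context: Coordinatisation of a projective plane $\mathcal P$ of order $n$: let $\mathcal R$ be a set of cardinality $n$ with two distinguished elements $0\neq 1$, and $\infty\notin\mathcal R$ a symbol. Choose a quadrangle $O,X,Y,I$ (four points, no three collinear). Label $O=(0,0)$, $X=(0)$, $Y=(\infty)$, $I=(1,1)$; set $[\infty]=\overline{XY}$, $[0]=\overline{OY}$, $[0,0]=\overline{OX}$. Set $(0,1)=\overline{XI}\cap[0]$, $(1,0)=\overline{YI}\cap[0,0]$, $J=(1)=\overline{(1,0)(0,1)}\cap[\infty]$. Label the remaining $n-2$ points of $[0]$ other than $O,Y,(0,1)$ as $(0,a)$, $a\in\mathcal R\setminus\{0,1\}$, arbitrarily. Then set $(a,0)=\overline{(0,a)J}\cap[0,0]$, $(a)=\overline{(0,a)(1,0)}\cap[\infty]$, $(a,b)=\overline{(a,0)Y}\cap\overline{(0,b)X}$, and label lines $[a]=\overline{(a,0)Y}$ and $[m,k]=\overline{(m)(0,k)}$. The planar ternary ring (PTR) is $T:\mathcal R^3\to\mathcal R$ with $T(m,x,y)=k$ iff $(x,y)\in[m,k]$. The additive loop is $x\oplus y=T(1,x,y)$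 (a loop on $\mathcal R$ with identity $0$) and the multiplicative loop is $x\odot y=T(x,y,0)$. *)

From mathcomp Require Import all_boot all_order.
Set Implicit Arguments. Unset Strict Implicit. Unset Printing Implicit Defensive.

Section Plane.
Variables (P : finType) (Lines : {set {set P}}).

Definition collinear3 (p q r : P) : bool :=
  [exists l in Lines, [&& p \in l, q \in l & r \in l]].

Definition quadrangle (O X Y U : P) : Prop :=
  [/\ uniq [:: O; X; Y; U],
      ~~ collinear3 O X Y, ~~ collinear3 O X U,
      ~~ collinear3 O Y U & ~~ collinear3 X Y U].

Definition proj_plane_of_order (n : nat) : Prop :=
  [/\ forall p q : P, p != q -> exists! l, l \in Lines /\ p \in l /\ q \in l,
      forall l m, l \in Lines -> m \in Lines -> l != m ->
        exists! p : P, p \in l /\ p \in m,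
      exists O X Y U, quadrangle O X Y U
    & forall l, l \in Lines -> #|l| = n.+1 ].

Definition has_fano_configuration : Prop :=
  exists (S : {set P}) (T : {set {set P}}),
    [/\ T \subset Lines, #|S| = 7, #|T| = 7,
        forall l, l \in T -> #|l :&: S| = 3
      & forall p, p \in S -> #|[set l in T | p \in l]| = 3].

(* the line through two points (meaningful for distinct points) *)
Definition join (p q : P) : {set P} :=
  odflt set0 [pick l in Lines | (p \in l) && (q \in l)].

(* the intersection point of two lines (meaningful for distinct lines);
   d is an irrelevant default value *)
Definition meet (d : P) (l m : {set P}) : P :=
  odflt d [pick p in l :&: m].

(* Coordinatisation w.r.t. quadrangle O, X, Y, U (U = the unit point I = (1,1))
   and labelling lab : R -> points of [0] other than Y, with
   lab a = (0,a). *)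
Section Coord.
Variables (R : finType) (zero one : R) (O X Y U : P) (lab : R -> P).

Definition line_inf := join X Y.
Definition line_0 := join O Y.
Definition line_00 := join O X.
Definition pt01 := meet O (join X U) line_0.
Definition pt10 := meet O (join Y U) line_00.
Definition ptJ := meet O (join pt10 pt01) line_inf.
Definition pt_a0 (a : R) := meet O (join (lab a) ptJ) line_00.
Definition pt_slope (a : R) := meet O (join (lab a) pt10) line_inf.
Definition pt_ab (a b : R) := meet O (join (pt_a0 a) Y) (join (lab b) X).
Definition line_mk (m k : R) := join (pt_slope m) (lab k).

Definition PTR (m x y : R) : R := odflt zero [pick k | pt_ab x y \in line_mk m k].

Definition loop_add (x y : R) : R := PTR one x y.

Definition is_coordinatisation (n : nat) : Prop :=
  [/\ zero != one, #|R| = n, quadrangle O X Y U,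
      lab zero = O & lab one = pt01] /\
  [/\ injective lab,
      forall r, lab r \in line_0 /\ lab r != Y
    & forall p, p \in line_0 -> p != Y -> exists r, lab r = p].

End Coord.
End Plane.

From mathcomp Require Import all_boot all_order.
Set Implicit Arguments. Unset Strict Implicit. Unset Printing Implicit Defensive.

(* A Fano configuration in a projective plane is the same thing as a quadrangle
   whose three diagonal points are collinear.  Coordinatising with respect to
   such a quadrangle O X Y I, the diagonal points are (1,0), (0,1) and J = (1),
   so I = (1,1) lies on the line OJ = [1,0], i.e. 1 (+) 1 = 0.  Conversely, if
   t (+) t = 0 for some t <> 0, then (t,t) lies on OJ, and the quadrangle
   O X Y (t,t) has the collinear diagonal points (t,0), (0,t) and J. *)

(* The Fano plane on Z/7: point i lies on line j iff i - j is in the perfect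
   difference set {0, 1, 3}. *)
Definition fano_incident (i j : nat) : bool := (i + 7 - j) %% 7 \in [:: 0; 1; 3].

Lemma card_ord_count n (p : pred nat) : #|[set i : 'I_n | p i]| = count p (iota 0 n).
Proof. by rewrite cardsE cardE /enum_mem size_filter -enumT -val_enum_ord count_map. Qed.

Lemma ord_rows_separate n (r : nat -> nat -> bool) :
  let I := iota 0 n in
  all (fun i => all (fun i' => (i == i') || has (fun j => r i j != r i' j) I) I) I ->
  forall i i' : 'I_n, i != i' -> exists j : 'I_n, r i j != r i' j.
Proof.
move=> I rows i i' ii'; have memI (k : 'I_n) : val k \in I by rewrite mem_iota ltn_ord.
have /orP[/eqP/val_inj/eqP|/hasP[j]] := allP (allP rows _ (memI i)) _ (memI i').
  by rewrite (negbTE ii').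
by rewrite mem_iota => /andP[_ lt_jn]; exists (Ordinal lt_jn).
Qed.

Lemma card_fano_line (j : 'I_7) : #|[set i : 'I_7 | fano_incident i j]| = 3.
Proof.
by rewrite (card_ord_count 7 (fano_incident^~ j)); case: j => -[|[|[|[|[|[|[|]]]]]]].
Qed.

Lemma card_fano_pencil (i : 'I_7) : #|[set j : 'I_7 | fano_incident i j]| = 3.
Proof.
by rewrite (card_ord_count 7 (fano_incident i)); case: i => -[|[|[|[|[|[|[|]]]]]]].
Qed.

Lemma sep_imsetT (T U : finType) (f : T -> U) (p : pred U) :
  [set y in f @: setT | p y] = f @: [set x | p (f x)].
Proof.
apply/setP => y; rewrite inE; apply/andP/imsetP => [[/imsetP[x _ ->] pfx]|[x]].
  by exists x; rewrite ?inE.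
by rewrite inE => pfx ->; rewrite imset_f.
Qed.

Lemma fano_configuration_of_incidence (P : finType) (Lines : {set {set P}})
    (pt : 'I_7 -> P) (ln : 'I_7 -> {set P}) :
  (forall j, ln j \in Lines) -> (forall i j, (pt i \in ln j) = fano_incident i j) ->
  has_fano_configuration Lines.
Proof.
move=> lnL incE.
have pt_inj : injective pt.
  move=> i i' ii'; apply: contraTeq isT.
  move=> /(@ord_rows_separate 7 fano_incident isT)[j].
  by rewrite -!incE ii' eqxx.
have ln_inj : injective ln.
  move=> j j' jj'; apply: contraTeq isT.
  move=> /(@ord_rows_separate 7 (fun j i => fano_incident i j) isT)[i].
  by rewrite -!incE jj' eqxx.
exists (pt @: setT), (ln @: setT); split.
- by apply/subsetP => _ /imsetP[j _ ->].
- by rewrite card_imset // cardsT card_ord.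
- by rewrite card_imset // cardsT card_ord.
- move=> _ /imsetP[j _ ->].
  rewrite (_ : _ :&: _ = [set y in pt @: setT | y \in ln j]); last first.
    by apply/setP => y; rewrite !inE andbC.
  rewrite sep_imsetT card_imset // -[RHS](card_fano_line j).
  by apply: eq_card => i; rewrite !inE incE.
- move=> _ /imsetP[i _ ->].
  rewrite sep_imsetT card_imset // -[RHS](card_fano_pencil i).
  by apply: eq_card => j; rewrite !inE incE.
Qed.

Section Incidence.
Variables (P : finType) (Lines : {set {set P}}) (n : nat).
Hypothesis plane : proj_plane_of_order Lines n.

Lemma eq_line l m x y : l \in Lines -> m \in Lines -> x != y ->
  x \in l -> y \in l -> x \in m -> y \in m -> l = m.
Proof.
case: plane => uniq_line _ _ _ lL mL xy xl yl xm ym.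
by have [l0 [_ l0U]] := uniq_line _ _ xy; rewrite -(l0U l) ?(l0U m).
Qed.

Lemma eq_point l m x y : l \in Lines -> m \in Lines -> l != m ->
  x \in l -> x \in m -> y \in l -> y \in m -> x = y.
Proof.
move=> lL mL lm xl xm yl ym; apply/eqP; apply: contraNT lm => xy.
by apply/eqP; apply: (eq_line lL mL xy).
Qed.

Lemma join_spec p q :
  [/\ join Lines p q \in Lines, p \in join Lines p q & q \in join Lines p q].
Proof.
have [l /and3P[lL pl ql]] : exists l, [&& l \in Lines, p \in l & q \in l].
  case: plane => uniq_line _ [O [X [_ [_ [/= /and3P[/norP[OX _] _ _] _ _ _ _]]]]] _.
  have [r rp] : exists r, r != p.
    by case: (eqVneq O p) => [<-|]; [exists X; rewrite eq_sym | exists O].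
  have [<-|pq] := eqVneq p q.
    by have [l [[lL [_ pl]] _]] := uniq_line _ _ rp; exists l; rewrite lL pl.
  by have [l [[lL [pl ql]] _]] := uniq_line _ _ pq; exists l; rewrite lL pl ql.
rewrite /join; case: pickP => [l' /and3P[-> -> ->] //|none].
by have := none l; rewrite lL pl ql.
Qed.

Lemma join_line p q : join Lines p q \in Lines. Proof. by case: (join_spec p q). Qed.
Lemma mem_joinl p q : p \in join Lines p q. Proof. by case: (join_spec p q). Qed.
Lemma mem_joinr p q : q \in join Lines p q. Proof. by case: (join_spec p q). Qed.

Lemma join_eq l p q : l \in Lines -> p != q -> p \in l -> q \in l -> join Lines p q = l.
Proof.
move=> lL pq pl ql; apply: (eq_line (join_line p q) lL pq) => //.
  exact: mem_joinl.
exact: mem_joinr.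
Qed.

Lemma joinC p q : join Lines p q = join Lines q p.
Proof.
have [->|pq] := eqVneq p q => //.
by rewrite (join_eq (join_line q p)) ?mem_joinl ?mem_joinr.
Qed.

Lemma meet_spec d l m : l \in Lines -> m \in Lines -> l != m ->
  meet d l m \in l /\ meet d l m \in m.
Proof.
case: plane => _ uniq_point _ _ lL mL lm.
have [p [[pl pm] _]] := uniq_point _ _ lL mL lm.
rewrite /meet; case: pickP => [x|none]; first by rewrite inE => /andP.
by have := none p; rewrite inE pl pm.
Qed.

Lemma meet_eq d l m p : l \in Lines -> m \in Lines -> l != m ->
  p \in l -> p \in m -> meet d l m = p.
Proof.
move=> lL mL lm pl pm; have [dl dm] := meet_spec d lL mL lm.
exact: (eq_point lL mL lm).
Qed.

Lemma noncollinear_notin_joins p q r : ~~ collinear3 Lines p q r ->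
  [/\ r \notin join Lines p q, q \notin join Lines p r & p \notin join Lines q r].
Proof.
move=> pqr; split; apply: contra pqr => in_join; apply/existsP.
- by exists (join Lines p q); rewrite join_line mem_joinl mem_joinr in_join.
- by exists (join Lines p r); rewrite join_line mem_joinl mem_joinr in_join.
- by exists (join Lines q r); rewrite join_line mem_joinl mem_joinr in_join.
Qed.

Lemma noncollinear_of_notin_join p q r : p != q -> r \notin join Lines p q ->
  ~~ collinear3 Lines p q r.
Proof.
move=> pq; apply: contra => /existsP[l /and4P[lL pl ql rl]].
by rewrite (join_eq lL pq pl ql).
Qed.

Lemma notin_other_line (l m : {set P}) (x y : P) : x \in l -> y \in l -> x \in m ->
  l \in Lines -> m \in Lines -> x != y -> l != m -> y \notin m.
Proof.
move=> xl yl xm lL mL xy; apply: contra => ym.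
by rewrite (eq_line lL mL xy xl yl xm ym).
Qed.

End Incidence.

(* Side conditions of incidence geometry are discharged by a depth-bounded
   search: two points differ when some line contains one but not the other, two
   lines differ when some point lies on one but not the other, and a point y of
   a line l is off a line m when l <> m meet in a point x <> y. *)
Ltac distinct :=
  match goal with
  | |- is_true (?x != ?y) => first
    [ assumption
    | rewrite eq_sym; assumption
    | match goal with H1 : is_true (x \in ?l), H2 : is_true (y \notin ?l) |- _ =>
        exact: (memPn H2 _ H1) end
    | match goal with H1 : is_true (y \in ?l), H2 : is_true (x \notin ?l) |- _ =>
        rewrite eq_sym; exact: (memPn H2 _ H1) end
    | match goal with H1 : is_true (?p \in x), H2 : is_true (?p \notin y) |- _ =>
        by apply: contraNneq H2 => <- end
    | match goal with H1 : is_true (?p \in y), H2 : is_true (?p \notin x) |- _ =>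
        by rewrite eq_sym; apply: contraNneq H2 => <- end ]
  end.

Ltac is_line := first [assumption | apply: join_line; eassumption].

Ltac notin_depth k :=
  lazymatch k with
  | O => assumption
  | S ?k' => first
    [ assumption
    | match goal with |- is_true (?y \notin ?m) =>
      match goal with
      | Hyl : is_true (y \in ?l), Hxl : is_true (?x \in ?l),
        Hxm : is_true (?x \in m) |- _ =>
          apply: (notin_other_line _ Hxl Hyl Hxm);
            [eassumption | is_line | is_line | distinct | lines_distinct k']
      end end ]
  end
with lines_distinct k :=
  first
  [ assumption
  | rewrite eq_sym; assumption
  | match goal with |- is_true (?l != _) =>
    match goal with _ : is_true (?z \in _) |- _ =>
      apply: (contraNneq _ (_ : z \notin l)); [by move=> -> | notin_depth k]
    end end ].

Ltac distinct_by_notin :=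
  match goal with |- is_true (?x != ?y) =>
    first
    [ match goal with H : is_true (x \in ?l) |- _ =>
        let Hy := fresh in
        have Hy : y \notin l; [notin_depth 2 | exact: (memPn Hy _ H)] end
    | match goal with H : is_true (y \in ?l) |- _ =>
        let Hx := fresh in have Hx : x \notin l;
          [notin_depth 2 | rewrite eq_sym; exact: (memPn Hx _ H)] end ]
  end.

Ltac quadrangle_facts plane qd :=
  match type of qd with quadrangle _ ?a ?b ?c ?d =>
    case: (qd) => _ /(noncollinear_notin_joins plane)[? ? ?]
      /(noncollinear_notin_joins plane)[? ? ?] /(noncollinear_notin_joins plane)[? ? ?]
      /(noncollinear_notin_joins plane)[? ? ?];
    have [_ ? ?] := join_spec plane a b; have [_ ? ?] := join_spec plane a c;
    have [_ ? ?] := join_spec plane a d; have [_ ? ?] := join_spec plane b c;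
    have [_ ? ?] := join_spec plane b d; have [_ ? ?] := join_spec plane c d
  end.

Ltac incidence :=
  first [ done | is_line | distinct | lines_distinct 2 | notin_depth 2 | distinct_by_notin
        | rewrite eq_sym; lines_distinct 2 ].

Section FanoQuadrangle.
Variables (P : finType) (Lines : {set {set P}}) (n : nat).
Hypothesis plane : proj_plane_of_order Lines n.

Definition fano_quadrangle (a b c d : P) : Prop :=
  quadrangle Lines a b c d /\
  exists (e f g : P) (h : {set P}),
    [/\ h \in Lines, [/\ e \in h, f \in h & g \in h],
        e \in join Lines a b :&: join Lines c d,
        f \in join Lines a c :&: join Lines b d
      & g \in join Lines a d :&: join Lines b c].

Definition has_involutive_coordinatisation : Prop :=
  exists (R : finType) (zero one : R) (O X Y U : P) (lab : R -> P),
    is_coordinatisation Lines zero one O X Y U lab n /\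
    exists t : R, t != zero /\ loop_add Lines zero one O X Y U lab t t = zero.

Lemma card_line_minus_point l p : l \in Lines -> p \in l -> #|l :\ p| = n.
Proof.
case: plane => _ _ _ card_line lL pl.
by have := cardsD1 p l; rewrite card_line // pl add1n => -[].
Qed.

Section Diagonals.
Variables (a b c d e f g : P) (h : {set P}).
Hypotheses (qd : quadrangle Lines a b c d) (hL : h \in Lines).
Hypotheses (eh : e \in h) (fh : f \in h) (gh : g \in h).
Hypotheses (eab : e \in join Lines a b) (ecd : e \in join Lines c d).
Hypotheses (fac : f \in join Lines a c) (fbd : f \in join Lines b d).
Hypotheses (gad : g \in join Lines a d) (gbc : g \in join Lines b c).

(* The quadrangle is {2, 4, 5, 6} and h is line 0 of the cyclic Fano plane. *)
Lemma fano_configuration_of_diagonals : has_fano_configuration Lines.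
Proof.
quadrangle_facts plane qd.
pose pt i := nth a [:: g; e; a; f; b; c; d] i.
pose ln j := nth h [:: h; join Lines a b; join Lines a c; join Lines b d;
                       join Lines b c; join Lines c d; join Lines a d] j.
apply: (@fano_configuration_of_incidence _ _ pt ln).
  by case=> -[|[|[|[|[|[|[|//]]]]]]] ?; rewrite /ln /= ?(join_line plane).
move=> [[|[|[|[|[|[|[|//]]]]]]] ?] [[|[|[|[|[|[|[|//]]]]]]] ?];
  rewrite /pt /ln /fano_incident /=; first [by apply/idP | apply/negbTE; incidence].
Qed.

Lemma fano_frame_points :
  [/\ pt01 Lines a b c d = f, pt10 Lines a b c d = e & ptJ Lines a b c d = g].
Proof.
quadrangle_facts plane qd.
have p01 : pt01 Lines a b c d = f by apply: (meet_eq plane) => //; incidence.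
have p10 : pt10 Lines a b c d = e by apply: (meet_eq plane) => //; incidence.
split=> //; rewrite /ptJ p10 p01 (join_eq plane hL _ eh fh); last by incidence.
by apply: (meet_eq plane) => //; incidence.
Qed.

Lemma fano_unit_point (R : finType) (lab : R -> P) (one : R) : lab one = f ->
  pt_slope Lines a b c d lab one = g /\ pt_ab Lines a b c d lab one one = d.
Proof.
quadrangle_facts plane qd; have [_ p10 J] := fano_frame_points.
rewrite /pt_slope /pt_ab /pt_a0 p10 J => ->.
rewrite (join_eq plane hL (_ : f != e) fh eh); last by incidence.
rewrite (join_eq plane hL (_ : f != g) fh gh); last by incidence.
split; first by apply: (meet_eq plane) => //; incidence.
rewrite (meet_eq plane a hL (join_line plane a b) _ eh eab); last by incidence.
rewrite (join_eq plane (join_line plane c d) (_ : e != c) ecd (mem_joinl plane c d));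
  last by incidence.
rewrite (join_eq plane (join_line plane b d) (_ : f != b) fbd (mem_joinl plane b d));
  last by incidence.
by apply: (meet_eq plane) => //; incidence.
Qed.

Lemma involutive_coordinatisation_of_diagonals : has_involutive_coordinatisation.
Proof.
quadrangle_facts plane qd; have [p01 _ _] := fano_frame_points.
pose R := {p : P | (p \in join Lines a c) && (p != c)}.
have [a_R f_R] : (a \in join Lines a c) && (a != c) /\ (f \in join Lines a c) && (f != c).
  by split; apply/andP; split=> //; incidence.
pose zero : R := exist _ a a_R; pose one : R := exist _ f f_R.
have [slope1 unit] := fano_unit_point (erefl : val one = f).
exists R, zero, one, a, b, c, d, val; split.
  split; first split => //.
  - by apply/eqP => /(congr1 val) /= /eqP; apply/negP; incidence.
  - rewrite card_sig -(card_line_minus_point (join_line plane a c) (mem_joinr plane a c)).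
    by apply: eq_card => x; rewrite !inE andbC.
  split; first exact: val_inj.
  - by move=> [r /= /andP[]].
  - by move=> p pl pc; exists (exist _ p (introT andP (conj pl pc))).
exists one; split; first by apply/eqP => /(congr1 val) /= /eqP; apply/negP; incidence.
rewrite /loop_add /PTR /line_mk unit slope1.
(* Without a fitting k, PTR is zero anyway. *)
case: pickP => [k /= dgk|//].
have /andP[kac kc] := valP k; apply: val_inj => /=.
have gd : g != d by incidence.
have kad : val k \in join Lines a d.
  rewrite -(join_eq plane (join_line plane a d) gd gad) ?(mem_joinr plane) //.
  rewrite (join_eq plane (join_line plane g (val k)) gd (mem_joinl plane _ _) dgk).
  exact: (mem_joinr plane).
by apply: (eq_point plane (join_line plane a d) (join_line plane a c)) => //; incidence.
Qed.

End Diagonals.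

Lemma fano_configuration_of_fano_quadrangle a b c d :
  fano_quadrangle a b c d -> has_fano_configuration Lines.
Proof.
case=> qd [e [f [g [h [hL [eh fh gh] /setIP[? ?] /setIP[? ?] /setIP[? ?]]]]]].
exact: (fano_configuration_of_diagonals qd hL eh fh gh).
Qed.

Lemma involutive_coordinatisation_of_fano_quadrangle a b c d :
  fano_quadrangle a b c d -> has_involutive_coordinatisation.
Proof.
case=> qd [e [f [g [h [hL [eh fh gh] /setIP[? ?] /setIP[? ?] /setIP[? ?]]]]]].
exact: (involutive_coordinatisation_of_diagonals qd hL eh fh gh).
Qed.

End FanoQuadrangle.

Section FanoConfiguration.
Variables (P : finType) (Lines : {set {set P}}) (n : nat).
Variables (S : {set P}) (T : {set {set P}}).
Hypotheses (plane : proj_plane_of_order Lines n) (sub_T : T \subset Lines).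
Hypotheses (card_S : #|S| = 7) (card_T : #|T| = 7).
Hypothesis line_S : forall l, l \in T -> #|l :&: S| = 3.
Hypothesis pencil_S : forall p, p \in S -> #|[set l in T | p \in l]| = 3.

Lemma size_fano_points (s : seq P) : uniq s -> {subset s <= S} -> size s <= 7.
Proof.
by move=> us sS; rewrite -card_S cardE; apply: uniq_leq_size us _ => x /sS; rewrite mem_enum.
Qed.

Lemma fano_points_exhaust (s : seq P) : uniq s -> {subset s <= S} -> size s = 7 ->
  {subset S <= s}.
Proof.
move=> us sS size_s z zS.
have s_enum : {subset s <= enum S} by move=> x /sS; rewrite mem_enum.
have [|_ ->] := uniq_min_size us s_enum; last by rewrite mem_enum.
by rewrite -cardE card_S size_s.
Qed.

Lemma fano_line_points l p : l \in T -> p \in l -> p \in S ->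
  exists x y, [/\ x \in l :&: S, y \in l :&: S, x != y, x != p & y != p].
Proof.
move=> lT pl pS; have /card_gt1P[x [y [/setD1P[xp xlS] /setD1P[yp ylS] xy]]] :
    1 < #|l :&: S :\ p|.
  by have := cardsD1 p (l :&: S); rewrite line_S // inE pl pS add1n => -[<-].
by exists x, y.
Qed.

(* Otherwise p, q and the two further points of S on each of the three lines of
   T through p would be eight distinct points of S. *)
Lemma fano_cover p q : p \in S -> q \in S -> p != q ->
  exists2 l, l \in T & (p \in l) && (q \in l).
Proof.
move=> pS qS pq; apply/exists_inP; apply: contraT.
rewrite negb_exists_in => /forall_inP noT.
have /card_gt2P[l1 [l2 [l3 [[/setIdP[l1T pl1] /setIdP[l2T pl2] /setIdP[l3T pl3]]]]]] :
    2 < #|[set l in T | p \in l]| by rewrite pencil_S.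
case=> l12 l23 l31; have inL l : l \in T -> l \in Lines by move/(subsetP sub_T).
have [l1L l2L l3L] := And3 (inL _ l1T) (inL _ l2T) (inL _ l3T).
have [ql1 ql2 ql3] := And3 (noT _ l1T) (noT _ l2T) (noT _ l3T).
rewrite pl1 pl2 pl3 /= in ql1 ql2 ql3.
have [x1 [y1 [/setIP[? ?] /setIP[? ?] ? ? ?]]] := fano_line_points l1T pl1 pS.
have [x2 [y2 [/setIP[? ?] /setIP[? ?] ? ? ?]]] := fano_line_points l2T pl2 pS.
have [x3 [y3 [/setIP[? ?] /setIP[? ?] ? ? ?]]] := fano_line_points l3T pl3 pS.
have [? ? ? ?] : [/\ x1 \notin l2, y1 \notin l2, x2 \notin l3 & y2 \notin l3].
  by split; incidence.
have [? ?] : x3 \notin l1 /\ y3 \notin l1 by split; incidence.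
have /size_fano_points : uniq [:: p; q; x1; y1; x2; y2; x3; y3].
  by rewrite /= !inE !negb_or /= !andbT; repeat (apply/andP; split); incidence.
by apply=> z; rewrite !inE => /or4P[|||/or4P[|||/orP[|]]] /eqP->.
Qed.

Lemma fano_third_point p q : p \in S -> q \in S -> p != q ->
  exists2 r, r \in S & [/\ r \in join Lines p q, r != p & r != q].
Proof.
move=> pS qS pq; have [l lT /andP[pl ql]] := fano_cover pS qS pq.
rewrite (join_eq plane (subsetP sub_T _ lT) pq pl ql).
have [x [y [/setIP[xl xS] /setIP[yl yS] xy xp yp]]] := fano_line_points lT pl pS.
have [<-|xq] := eqVneq x q; last by exists x.
by exists y => //; split; rewrite // eq_sym.
Qed.

Lemma fano_last_point p q y (s : seq P) : {subset S <= [:: p, q, y & s]} ->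
  p \in S -> q \in S -> p != q -> all (fun u => u \notin join Lines p q) s ->
  y \in join Lines p q.
Proof.
move=> S_sub pS qS pq /allP s_off.
have [r rS [rpq rp rq]] := fano_third_point pS qS pq.
move: (S_sub r rS); rewrite !inE (negbTE rp) (negbTE rq) /= => /orP[/eqP<- //|rs].
by move: (s_off r rs); rewrite rpq.
Qed.

Definition fano_spoke (h : {set P}) (a x y : P) : bool :=
  [&& x \in h :&: S, y \in join Lines a x :&: S, y != a & y != x].

Lemma fano_spoke_off h a b c e f : h \in T -> a \notin h ->
  fano_spoke h a e b -> fano_spoke h a f c -> e != f ->
  f \notin join Lines a e /\ c \notin join Lines a e.
Proof.
move=> hT ah /and4P[/setIP[eh _] _ _ _] /and4P[/setIP[fh _] /setIP[caf _] ca _] ef.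
have hL := subsetP sub_T _ hT; have [_ ? ?] := join_spec plane a e.
have [_ ? ?] := join_spec plane a f.
have fae : f \notin join Lines a e by incidence.
by split=> //; incidence.
Qed.

(* S consists of a, ..., g, and of these only d can be the third point of S on
   the line ce. *)
Lemma fano_opposite h a b c d e f g : h \in T -> a \in S -> a \notin h ->
  fano_spoke h a e b -> fano_spoke h a f c -> fano_spoke h a g d ->
  e != f -> f != g -> g != e -> d \in join Lines c e.
Proof.
move=> hT aS ah spe spf spg ef fg ge; have hL := subsetP sub_T _ hT.
have [fe gf eg] : [/\ f != e, g != f & e != g] by split; rewrite eq_sym.
have [? ?] := fano_spoke_off hT ah spe spf ef; have [? ?] := fano_spoke_off hT ah spf spe fe.
have [? ?] := fano_spoke_off hT ah spf spg fg; have [? ?] := fano_spoke_off hT ah spg spf gf.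
have [? ?] := fano_spoke_off hT ah spg spe ge; have [? ?] := fano_spoke_off hT ah spe spg eg.
move: spe spf spg => /and4P[/setIP[? ?] /setIP[? ?] ? ?] /and4P[/setIP[? ?] /setIP[? ?] ? ?].
case/and4P=> [/setIP[? ?] /setIP[? ?] ? ?].
have [_ ? ?] := join_spec plane a e; have [_ ? ?] := join_spec plane a f.
have [_ ? ?] := join_spec plane a g; have [_ ? ?] := join_spec plane c e.
have [? ? ?] : [/\ b \notin h, c \notin h & d \notin h] by split; incidence.
have S_sub : {subset S <= [:: a; b; c; d; e; f; g]}.
  apply: fano_points_exhaust => //.
    by rewrite /= !inE !negb_or /= !andbT; repeat (apply/andP; split); incidence.
  by move=> z; rewrite !inE => /or4P[|||/or4P[|||]] /eqP->.
apply: (fano_last_point (s := [:: a; b; f; g])) => //.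
- by move=> z /S_sub; apply/allP: z; rewrite /= !inE !eqxx ?orbT.
- by incidence.
- by apply/and5P; split=> //; incidence.
Qed.

Lemma fano_quadrangle_of_spokes h a b c d e f g : h \in T -> a \in S -> a \notin h ->
  fano_spoke h a e b -> fano_spoke h a f c -> fano_spoke h a g d ->
  e != f -> f != g -> g != e -> fano_quadrangle Lines a b c d.
Proof.
move=> hT aS ah spe spf spg ef fg ge; have hL := subsetP sub_T _ hT.
have dce := fano_opposite hT aS ah spe spf spg ef fg ge.
have bdf := fano_opposite hT aS ah spf spg spe fg ge ef.
have cbg := fano_opposite hT aS ah spg spe spf ge ef fg.
have eg : e != g by rewrite eq_sym.
have [_ ?] := fano_spoke_off hT ah spe spf ef; have [_ ?] := fano_spoke_off hT ah spe spg eg.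
have [_ ?] := fano_spoke_off hT ah spf spg fg; have [_ ?] := fano_spoke_off hT ah spg spe ge.
move: spe spf spg => /and4P[/setIP[eh _] /setIP[bae _] ? ?].
case/and4P=> [/setIP[fh _] /setIP[caf _] ? ?] /and4P[/setIP[gh _] /setIP[dag _] ? ?].
have [_ ? ?] := join_spec plane a e; have [_ ? ?] := join_spec plane a f.
have [_ ? ?] := join_spec plane a g; have [_ ? ?] := join_spec plane c e.
have [_ ? ?] := join_spec plane d f; have [_ ? ?] := join_spec plane b g.
have [ab ac ad] : [/\ a != b, a != c & a != d] by split; incidence.
have [bc bd cd] : [/\ b != c, b != d & c != d] by split; incidence.
have Jab := join_eq plane (join_line plane a e) ab (mem_joinl plane a e) bae.
have Jac := join_eq plane (join_line plane a f) ac (mem_joinl plane a f) caf.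
have Jad := join_eq plane (join_line plane a g) ad (mem_joinl plane a g) dag.
have Jbc := join_eq plane (join_line plane b g) bc (mem_joinl plane b g) cbg.
have Jbd := join_eq plane (join_line plane d f) bd bdf (mem_joinl plane d f).
have Jcd := join_eq plane (join_line plane c e) cd (mem_joinl plane c e) dce.
split; last first.
  by exists e, f, g, h; rewrite Jab Jac Jad Jbc Jbd Jcd; split=> //; apply/setIP.
split; try by apply: (noncollinear_of_notin_join plane); rewrite ?Jab ?Jac ?Jbc; incidence.
by rewrite /= !inE !negb_or /= !andbT; repeat (apply/andP; split); incidence.
Qed.

Lemma fano_quadrangle_in_configuration : exists a b c d, fano_quadrangle Lines a b c d.
Proof.
have [h hT] : exists h, h \in T by apply/card_gt0P; rewrite card_T.
have /card_gt2P[e [f [g [[eS' fS' gS'] [ef fg ge]]]]] : 2 < #|h :&: S| by rewrite line_S.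
have /subsetPn[a aS ah] : ~~ (S \subset h).
  by apply/negP => /setIidPr Sh; move: (line_S hT); rewrite Sh card_S.
have [[eh eS] [fh fS] [gh gS]] := And3 (setIP eS') (setIP fS') (setIP gS').
have [ae af ag] : [/\ a != e, a != f & a != g] by split; incidence.
have [b bS [bae ba be]] := fano_third_point aS eS ae.
have [c cS [caf ca cf]] := fano_third_point aS fS af.
have [d dS [dag da dg]] := fano_third_point aS gS ag.
exists a, b, c, d; apply: (fano_quadrangle_of_spokes hT aS ah _ _ _ ef fg ge);
  by apply/and4P; split; rewrite // inE; apply/andP.
Qed.

End FanoConfiguration.

Section Frame.
Variables (P : finType) (Lines : {set {set P}}) (n : nat).
Hypothesis plane : proj_plane_of_order Lines n.
Variables (O X Y U : P).
Hypothesis frame : quadrangle Lines O X Y U.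

Lemma pt01_spec : let p := pt01 Lines O X Y U in
  [/\ p \in join Lines O Y, p \in join Lines X U,
      p \notin join Lines O X & p \notin join Lines X Y].
Proof.
rewrite /pt01 /line_0; quadrangle_facts plane frame.
have XU_OY : join Lines X U != join Lines O Y by incidence.
have [? ?] := meet_spec plane O (join_line plane X U) (join_line plane O Y) XU_OY.
by split; incidence.
Qed.

Lemma pt10_spec : let p := pt10 Lines O X Y U in
  [/\ p \in join Lines O X, p \in join Lines Y U,
      p \notin join Lines O Y & p \notin join Lines X Y].
Proof.
rewrite /pt10 /line_00; quadrangle_facts plane frame.
have YU_OX : join Lines Y U != join Lines O X by incidence.
have [? ?] := meet_spec plane O (join_line plane Y U) (join_line plane O X) YU_OX.
by split; incidence.
Qed.

Lemma ptJ_spec : let J := ptJ Lines O X Y U in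
  [/\ J \in join Lines X Y, J \notin join Lines O Y & J \notin join Lines O X].
Proof.
rewrite /ptJ /line_inf; quadrangle_facts plane frame.
have := pt01_spec; have := pt10_spec.
set p10 := pt10 _ _ _ _ _; set p01 := pt01 _ _ _ _ _ => -[? ? ? ?] [? ? ? ?].
have [_ ? ?] := join_spec plane p10 p01.
have p10p01_XY : join Lines p10 p01 != join Lines X Y by incidence.
have [? ?] := meet_spec plane O (join_line plane p10 p01) (join_line plane X Y) p10p01_XY.
by split; incidence.
Qed.

Lemma diagonal_point_spec B : B \in join Lines O Y -> B != O -> B != Y ->
  let J := ptJ Lines O X Y U in
  let A := meet O (join Lines B J) (join Lines O X) in
  let Q := meet O (join Lines A Y) (join Lines B X) in
  [/\ A \in join Lines B J, A \in join Lines O X, Q \in join Lines A Y,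
      Q \in join Lines B X & quadrangle Lines O X Y Q].
Proof.
move=> BOY BO BY J A Q; quadrangle_facts plane frame.
have := ptJ_spec; rewrite -/J => -[? ? ?].
have [_ ? ?] := join_spec plane B J; have [_ ? ?] := join_spec plane B X.
have [? ?] : B \notin join Lines O X /\ B \notin join Lines X Y by split; incidence.
have [? ?] : O \notin join Lines B J /\ X \notin join Lines B J by split; incidence.
have BJ_OX : join Lines B J != join Lines O X by incidence.
have [AB AOX] : A \in join Lines B J /\ A \in join Lines O X.
  exact: (meet_spec plane O (join_line plane B J) (join_line plane O X) BJ_OX).
have [? ?] : A \notin join Lines O Y /\ A \notin join Lines X Y by split; incidence.
have [_ ? ?] := join_spec plane A Y.
have [? ?] : X \notin join Lines A Y /\ O \notin join Lines A Y by split; incidence.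
have [? ?] : A \notin join Lines B X /\ Y \notin join Lines B X by split; incidence.
have AY_BX : join Lines A Y != join Lines B X by incidence.
have [QA QB] : Q \in join Lines A Y /\ Q \in join Lines B X.
  exact: (meet_spec plane O (join_line plane A Y) (join_line plane B X) AY_BX).
have QXY : Q \notin join Lines X Y by incidence.
have [? ?] : Q \notin join Lines O Y /\ Q \notin join Lines O X by split; incidence.
split=> //; split; try by apply: (noncollinear_of_notin_join plane); incidence.
by rewrite /= !inE !negb_or /= !andbT; repeat (apply/andP; split); incidence.
Qed.

End Frame.

Section Coordinates.
Variables (P : finType) (Lines : {set {set P}}) (n : nat).
Hypothesis plane : proj_plane_of_order Lines n.
Variables (R : finType) (zero one : R) (O X Y U : P) (lab : R -> P).
Hypothesis coord : is_coordinatisation Lines zero one O X Y U lab n.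

Let frame : quadrangle Lines O X Y U. Proof. by case: coord => -[]. Qed.

Lemma pt_slope_one : pt_slope Lines O X Y U lab one = ptJ Lines O X Y U.
Proof. by case: coord => -[_ _ _ _ lab1] _; rewrite /pt_slope lab1 (joinC plane). Qed.

(* [PTR] returns [zero] when no [k] fits; here some [k] does, since the line
   through J and (x,y) meets [0] away from Y. *)
Lemma mem_line_loop_add x y : pt_ab Lines O X Y U lab x y \notin join Lines X Y ->
  pt_ab Lines O X Y U lab x y
    \in join Lines (ptJ Lines O X Y U) (lab (loop_add Lines zero one O X Y U lab x y)).
Proof.
have [_ [_ _ lab_onto]] := coord.
set Q := pt_ab _ _ _ _ _ _ x y; set J := ptJ _ _ _ _ _ => QXY.
rewrite /loop_add /PTR /line_mk pt_slope_one -/J.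
case: pickP => [k //|none]; exfalso.
have := ptJ_spec plane frame; rewrite -/J => -[? ? _].
have [_ ? ?] := join_spec plane J Q; have [_ ? ?] := join_spec plane O Y.
have [_ ? ?] := join_spec plane X Y.
have JQ_OY : join Lines J Q != join Lines O Y by incidence.
have [qJQ qOY] := meet_spec plane O (join_line plane J Q) (join_line plane O Y) JQ_OY.
move: qJQ qOY; set q := meet _ _ _ => qJQ qOY.
have [qY Jq] : q != Y /\ J != q by split; incidence.
have [r rq] := lab_onto q qOY qY.
have := none r; rewrite /= rq.
rewrite (join_eq plane (join_line plane J Q) Jq (mem_joinl plane J Q) qJQ).
by rewrite (mem_joinr plane).
Qed.

Lemma fano_quadrangle_of_involution t : t != zero ->
  loop_add Lines zero one O X Y U lab t t = zero ->
  fano_quadrangle Lines O X Y (pt_ab Lines O X Y U lab t t).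
Proof.
have [[_ _ _ lab0 _] [lab_inj lab_l0 _]] := coord.
move=> tz tt0; have [BOY BY] := lab_l0 t.
have BO : lab t != O by rewrite -lab0 (inj_eq lab_inj).
set B := lab t in BOY BY BO.
have [AB AOX QA QB qd] := diagonal_point_spec plane frame BOY BO BY.
set J := ptJ _ _ _ _ _ in AB AOX QA QB qd *; set A := meet _ _ _ in AB AOX QA QB qd *.
set Q := meet O _ _ in QA QB qd.
have -> : pt_ab Lines O X Y U lab t t = Q by [].
have [_ _ /(noncollinear_notin_joins plane)[QOX _ _] _
      /(noncollinear_notin_joins plane)[QXY _ _]] := qd.
have JO : Q \in join Lines J O by move: (mem_line_loop_add QXY); rewrite tt0 lab0.
have [JXY _ _] := ptJ_spec plane frame.
have YQ := memPn QXY Y (mem_joinr plane X Y); have XQ := memPn QXY X (mem_joinl plane X Y).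
have OQ := memPn QOX O (mem_joinl plane O X).
rewrite /fano_quadrangle (join_eq plane (join_line plane A Y) YQ (mem_joinr plane A Y) QA).
rewrite (join_eq plane (join_line plane B X) XQ (mem_joinr plane B X) QB).
rewrite (join_eq plane (join_line plane J O) OQ (mem_joinr plane J O) JO).
split=> //; exists A, B, J, (join Lines B J).
by rewrite !inE AOX BOY JXY AB !(mem_joinl plane) !(mem_joinr plane) (join_line plane).
Qed.

End Coordinates.

Theorem theorem2p2 (P : finType) (Lines : {set {set P}}) (n : nat) :
  proj_plane_of_order Lines n ->
  (has_fano_configuration Lines <->
   exists (R : finType) (zero one : R) (O X Y U : P) (lab : R -> P),
     is_coordinatisation Lines zero one O X Y U lab n /\
     exists t : R, t != zero /\ loop_add Lines zero one O X Y U lab t t = zero).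
Proof.
move=> plane; rewrite -/(has_involutive_coordinatisation Lines n); split.
  case=> S [T [sub_T card_S card_T line_S pencil_S]].
  have [a [b [c [d fq]]]] :=
    fano_quadrangle_in_configuration plane sub_T card_S card_T line_S pencil_S.
  exact: (involutive_coordinatisation_of_fano_quadrangle plane fq).
case=> R [zero [one [O [X [Y [U [lab [coord [t [tz tt0]]]]]]]]]].
apply: (fano_configuration_of_fano_quadrangle plane).
exact: (fano_quadrangle_of_involution plane coord tz tt0).
Qed.
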